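(* The problem of learning an unknown LPTS $U$ (up to strong simulation equivalence) is undecidable in the active learning framework with both the Friendly Teacher condition on the teacher and the minimum-state condition on the learner: there is no learner algorithm satisfying the minimum-state condition that, for every target LPTS $U$ and every teacher obeying the framework rules and the Friendly Teacher condition, after finitely many rounds conjectures a hypothesis $H$ with $H\simeq U$.
   Context: An LPTS is $\langle S,s^0,\alpha,\tau\rangle$ with finite state set $S$, start state $s^0$, finite action set $\alpha$, finite $\tau\subseteq S\times\alpha\times\mathrm{Dist}(S)$, where $\mathrm{Dist}(S)$ is the set of discrete probability distributions on $S$ (rational probabilities); write $s\xrightarrow{a}\mu$. A stochastic tree is an LPTS whose start state is in the support of no transition's distribution and every other state is in the support of exactly one transition's distribution. Strong simulation: for $R\subseteq S_1\times S_2$, $\mu_1\sqsubseteq_R\mu_2$ iff there is $w:S_1\times S_2\to\mathbb{Q}\cap[0,1]$ with $\sum_{s_2}w(s_1,s_2)=\mu_1(s_1)$, $\sum_{s_1}w(s_1,s_2)=\mu_2(s_2)$ and $w(s_1,s_2)>0\Rightarrow s_1Rs_2$; $R$ is a strong simulation iff $s_1Rs_2$ and $s_1\xrightarrow{a}\mu_1$ imply some $s_2\xrightarrow{a}\mu_2$ with $\mu_1\sqsubseteq_R\mu_2$; $L_1\preceq L_2$ iff a strong simulation relates the start states; $L_1\simeq L_2$ iff both $L_1\preceq L_2$ and $L_2\preceq L_1$. Active learning framework: unknown target LPTS $U$; in each round the learner conjectures a hypothesis $H$; the teacher checks $H\simeq U$ and, if it fails, returns either a negative counterexample (a tree $C$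 with $C\preceq H$, $C\not\preceq U$) or a positive one (a tree $C$ with $C\preceq U$, $C\not\preceq H$); letting $\mathcal{P}$, $\mathcal{N}$ be the sets of positive and negative counterexamples returned so far, there must always exist an LPTS consistent with them (an LPTS $L$ is consistent with $\mathcal{P},\mathcal{N}$ iff $P\preceq L$ for all $P\in\mathcal{P}$ and $N\not\preceq L$ for all $N\in\mathcal{N}$), and each conjecture must be consistent with the counterexamples received so far. An execution mapping from a tree $C$ to an LPTS $L$ is a total map $M:S_C\to S_L$ such that for every transition $c\xrightarrow{a}\mu_c$ of $C$ there is a transition $M(c)\xrightarrow{a}\mu$ of $L$ with $M$ injective on $\mathrm{supp}(\mu_c)$ and $\mu_c(c')=\mu(M(c'))$ for every $c'\in\mathrm{supp}(\mu_c)$. Friendly Teacher condition: every positive counterexample returned has an execution mapping to $U$, and every negative counterexample has an execution mapping to the current hypothesis $H$. Minimum-state condition on the learner: every hypothesis $H$ conjectured is an LPTS with the minimum number of states among all LPTSes consistent with the current $\mathcal{P}$ and $\mathcal{N}$. *)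

From mathcomp Require Import all_boot all_order all_algebra.
Set Implicit Arguments. Unset Strict Implicit. Unset Printing Implicit Defensive.
Import Order.TTheory GRing.Theory Num.Theory.
Local Open Scope ring_scope.

(* Actions are labelled by natural numbers; each LPTS uses only finitely
   many of them (those occurring in its finite transition set). *)
Definition action := nat.

Definition is_dist (n : nat) (mu : {ffun 'I_n -> rat}) : bool :=
  [forall s, 0 <= mu s] && (\sum_(s < n) mu s == 1).

Record lpts := LPTS {
  nst : nat;
  start : 'I_nst;
  trans : seq ('I_nst * action * {ffun 'I_nst -> rat});
  trans_uniq : uniq trans;
  trans_dist : all (fun t => is_dist t.2) trans
}.

Definition in_supp n (mu : {ffun 'I_n -> rat}) (s : 'I_n) : bool := 0 < mu s.

Definition is_tree (L : lpts) : Prop :=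
  (forall t, t \in trans L -> ~~ in_supp t.2 (start L)) /\
  (forall s, s != start L ->
     count (fun t => in_supp t.2 s) (trans L) = 1%N).

Definition dist_sim n1 n2 (R : 'I_n1 -> 'I_n2 -> Prop)
    (mu1 : {ffun 'I_n1 -> rat}) (mu2 : {ffun 'I_n2 -> rat}) : Prop :=
  exists w : 'I_n1 -> 'I_n2 -> rat,
    (forall s1 s2, 0 <= w s1 s2 <= 1) /\
    (forall s1, \sum_(s2 < n2) w s1 s2 = mu1 s1) /\
    (forall s2, \sum_(s1 < n1) w s1 s2 = mu2 s2) /\
    (forall s1 s2, 0 < w s1 s2 -> R s1 s2).

Definition strong_simulation (L1 L2 : lpts)
    (R : 'I_(nst L1) -> 'I_(nst L2) -> Prop) : Prop :=
  forall s1 s2, R s1 s2 ->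
  forall a mu1, (s1, a, mu1) \in trans L1 ->
  exists mu2, (s2, a, mu2) \in trans L2 /\ dist_sim R mu1 mu2.

Definition sim (L1 L2 : lpts) : Prop :=
  exists R, strong_simulation R /\ R (start L1) (start L2).

Definition sim_equiv (L1 L2 : lpts) : Prop := sim L1 L2 /\ sim L2 L1.

Definition exec_mapping (C L : lpts) : Prop :=
  exists M : 'I_(nst C) -> 'I_(nst L),
  forall c a muc, (c, a, muc) \in trans C ->
  exists mu, (M c, a, mu) \in trans L /\
    {in in_supp muc &, injective M} /\
    (forall c', in_supp muc c' -> muc c' = mu (M c')).

(* A counterexample: (true, C) positive, (false, C) negative. *)
Definition cex := (bool * lpts)%type.

Fixpoint consistent (h : seq cex) (L : lpts) : Prop :=
  match h with
  | [::] => True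
  | (b, C) :: h' => (if b then sim C L else ~ sim C L) /\ consistent h' L
  end.

(* A (deterministic) learner maps the history of counterexamples received
   so far (in chronological order) to its next conjecture. *)
Definition learner := seq cex -> lpts.

Definition min_state_learner (lrn : learner) : Prop :=
  forall h, (exists L, consistent h L) ->
    consistent h (lrn h) /\
    (forall L, consistent h L -> (nst (lrn h) <= nst L)%N).

Definition history (c : nat -> cex) (k : nat) : seq cex :=
  [seq c i | i <- iota 0 k].

(* An infinite run of the learning game for learner lrn, target U and the
   teacher answering with counterexample c k in round k; the teacher obeys the
   framework rules and the Friendly Teacher condition, and the conjecture
   of every round fails the equivalence check. *)
Definition bad_run (lrn : learner) (U : lpts) (c : nat -> cex) : Prop :=
  forall k,
    let H := lrn (history c k) in
    ~ sim_equiv H U /\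
    is_tree (c k).2 /\
    (if (c k).1
     then sim (c k).2 U /\ ~ sim (c k).2 H /\ exec_mapping (c k).2 U
     else sim (c k).2 H /\ ~ sim (c k).2 U /\ exec_mapping (c k).2 H) /\
    (exists L, consistent (history c k.+1) L).

(* The target [U] moves under [aA] with probabilities 1/4, 1/2, 1/4 to a
   state enabling [aD], a dead state and a state enabling [aC].  For
   1/4 <= q <= 3/4 the two-state LPTS [M q], which moves under [aA] with
   probability q to a state enabling [aC] and otherwise to one enabling [aD],
   simulates the tree unfolding [T] of [U]; so a minimum-state learner never
   conjectures more than two states.  The teacher keeps an interval of such
   parameters q for which [M q] is consistent with all answers.  If the
   conjecture [H] does not simulate [T], [T] is a positive counterexample.
   Otherwise a counting argument on two states shows that the [aA]-transition
   of [H] enables [aC] and [aD] with total probability at least 1, so one of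
   them is enabled with probability above 1/4 and above what [M q] gives it
   on one half of the interval.  The depth-two unfolding of [H] along [aA]
   and that action is then a negative counterexample: it maps into [H], it is
   simulated by neither [U] nor the [M q] of that half, and the other half
   survives.  The interval never becomes empty, so the game never ends. *)

From Pilot Require Import Defs.
From Stdlib Require Import ClassicalEpsilon.
From mathcomp Require Import all_boot all_order all_algebra.
From mathcomp Require Import lra.
Set Implicit Arguments. Unset Strict Implicit. Unset Printing Implicit Defensive.
Import Order.TTheory GRing.Theory Num.Theory.
Local Open Scope ring_scope.

Lemma big_option (R : Type) (idx : R) (op : Monoid.law idx) (X : finType)
    (F : option X -> R) :
  \big[op/idx]_(o : option X) F o = op (F None) (\big[op/idx]_(x : X) F (Some x)).
Proof.
have -> : index_enum (option X) = None :: map Some (index_enum X).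
  by rewrite /index_enum !unlock /= /option_enum; rewrite unlock.
by rewrite big_cons big_map.
Qed.

Lemma ge0_Ngt0_eq0 (R : numDomainType) (x : R) : 0 <= x -> ~~ (0 < x) -> x = 0.
Proof. by move=> x_ge0; rewrite lt_def x_ge0 andbT negbK => /eqP. Qed.

Lemma ler_term_psumr (R : numDomainType) (I : finType) (F : I -> R) i :
  (forall j, 0 <= F j) -> F i <= \sum_j F j.
Proof. by move=> F_ge0; rewrite (bigD1 i) //= lerDl sumr_ge0. Qed.

Lemma sumr_delta (R : nmodType) (I : finType) (x : I) (v : R) :
  \sum_(l : I) (if x == l then v else 0) = v.
Proof.
by rewrite (bigD1 x) //= eqxx big1 ?addr0 // => l; rewrite eq_sym => /negbTE ->.
Qed.

Lemma is_dist_trans (L : lpts) s a mu : (s, a, mu) \in trans L -> is_dist mu.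
Proof. exact: (allP (trans_dist L) (s, a, mu)). Qed.

Section Distributions.
Variables (n : nat) (mu : {ffun 'I_n -> rat}).
Hypothesis mu_dist : is_dist mu.

Lemma dist_ge0 i : 0 <= mu i.
Proof. by case/andP: mu_dist => /forallP. Qed.

Lemma dist_sum : \sum_i mu i = 1.
Proof. by case/andP: mu_dist => _ /eqP. Qed.

Lemma dist_le1 i : mu i <= 1.
Proof. by rewrite -dist_sum ler_term_psumr //; apply: dist_ge0. Qed.

End Distributions.

(* The coupling lives on the graph of [M]; its column sums can only fall short
   of [mu2], and since both sides have total mass 1 they cannot. *)
Lemma dist_sim_graph n1 n2 (M : 'I_n1 -> 'I_n2) mu1 mu2 :
  is_dist mu1 -> is_dist mu2 -> {in in_supp mu1 &, injective M} ->
  (forall c, in_supp mu1 c -> mu1 c = mu2 (M c)) ->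
  dist_sim (fun x y => M x = y) mu1 mu2.
Proof.
move=> D1 D2 M_inj M_eq; have g1 := dist_ge0 D1; have g2 := dist_ge0 D2.
pose w x y := if M x == y then mu1 x else 0.
have w_ge0 x y : 0 <= w x y by rewrite /w; case: eqP.
have w_row x : \sum_y w x y = mu1 x by rewrite sumr_delta.
have w_col_le y : \sum_x w x y <= mu2 y.
  case: (pickP (fun c => in_supp mu1 c && (M c == y))) => [c /andP[c_supp /eqP Mc]|none].
    rewrite (bigD1 c) //= /w Mc eqxx big1 ?addr0 -?Mc ?M_eq // => x x_neq_c.
    case: eqP => // Mx; apply: ge0_Ngt0_eq0 => //; apply/negP => x_supp.
    by rewrite (M_inj x c) ?eqxx ?Mx ?Mc in x_neq_c.
  rewrite big1 ?g2 // => x _; rewrite /w; case: eqP => // Mx.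
  by apply: ge0_Ngt0_eq0 => //; move: (none x); rewrite Mx eqxx andbT => /negbT.
have w_col y : \sum_x w x y = mu2 y.
  have slack : \sum_y (mu2 y - \sum_x w x y) = 0.
    by rewrite sumrB (dist_sum D2) exchange_big (eq_bigr _ (fun x _ => w_row x))
      (dist_sum D1) subrr.
  apply/eqP; rewrite eq_sym -subr_eq0; apply/eqP.
  by move/psumr_eq0P: slack; apply=> // z _; rewrite subr_ge0.
exists w; split; [|split; [|split]] => // [x y|x y].
- by rewrite w_ge0 /w; case: eqP => _ //; exact: dist_le1.
- by rewrite /w; case: eqP => // _; rewrite ltxx.
Qed.

Definition is_exec_mapping (C L : lpts) (M : 'I_(nst C) -> 'I_(nst L)) : Prop :=
  forall c a muc, (c, a, muc) \in trans C ->
  exists mu, (M c, a, mu) \in trans L /\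
    {in in_supp muc &, injective M} /\
    (forall c', in_supp muc c' -> muc c' = mu (M c')).
Arguments is_exec_mapping : clear implicits.

Lemma exec_mapping_sim C L M :
  is_exec_mapping C L M -> M (start C) = start L -> sim C L.
Proof.
move=> M_exec M_start; exists (fun x y => M x = y); split=> //.
move=> s1 s2 <- a mu1 tr1; have [mu [tr2 [M_inj M_eq]]] := M_exec _ _ _ tr1.
by exists mu; split; last apply: dist_sim_graph (is_dist_trans tr1) (is_dist_trans tr2) _ _.
Qed.

(* Couplings compose by gluing along the middle distribution:
   [w i k = sum_j w1 i j * w2 j k / mu2 j]. *)
Lemma dist_sim_comp n1 n2 n3 (R1 : 'I_n1 -> 'I_n2 -> Prop) (R2 : 'I_n2 -> 'I_n3 -> Prop)
    mu1 mu2 mu3 :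
  is_dist mu1 -> dist_sim R1 mu1 mu2 -> dist_sim R2 mu2 mu3 ->
  dist_sim (fun x z => exists y, R1 x y /\ R2 y z) mu1 mu3.
Proof.
move=> D1 [w1 [w1b [w1r [w1c w1R]]]] [w2 [w2b [w2r [w2c w2R]]]].
have w1_ge0 i j : 0 <= w1 i j by case/andP: (w1b i j).
have w2_ge0 i j : 0 <= w2 i j by case/andP: (w2b i j).
have w1_eq0 i j : mu2 j = 0 -> w1 i j = 0.
  move=> mu2j0; apply/eqP; rewrite eq_le w1_ge0 andbT.
  by have := ler_term_psumr i (w1_ge0^~ j); rewrite w1c mu2j0.
have w2_eq0 i j : mu2 i = 0 -> w2 i j = 0.
  move=> mu2i0; apply/eqP; rewrite eq_le w2_ge0 andbT.
  by have := ler_term_psumr j (w2_ge0 i); rewrite w2r mu2i0.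
pose t i k j := if mu2 j == 0 then 0 else w1 i j * w2 j k / mu2 j.
have t_ge0 i k j : 0 <= t i k j.
  by rewrite /t; case: eqP => // _; rewrite divr_ge0 // -?w1c ?sumr_ge0 ?mulr_ge0.
pose w i k := \sum_j t i k j.
have w_ge0 i k : 0 <= w i k by apply: sumr_ge0.
have w_row i : \sum_k w i k = mu1 i.
  rewrite exchange_big /= -w1r; apply: eq_bigr => j _.
  have [mu2j0|mu2j_neq0] := eqVneq (mu2 j) 0; first by rewrite /t mu2j0 big1 // w1_eq0.
  by rewrite /t (negbTE mu2j_neq0) -mulr_suml -mulr_sumr w2r mulfK.
have w_col k : \sum_i w i k = mu3 k.
  rewrite exchange_big /= -w2c; apply: eq_bigr => j _.
  have [mu2j0|mu2j_neq0] := eqVneq (mu2 j) 0; first by rewrite /t mu2j0 big1 // w2_eq0.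
  rewrite /t (negbTE mu2j_neq0) -mulr_suml -mulr_suml w1c.
  by rewrite mulrC mulrA mulVf ?mul1r.
exists w; split; [|split; [|split]] => // [i k|i k /lt0r_neq0 /eqP /psumr_neq0P [] // j /= tpos].
- by rewrite w_ge0 (le_trans _ (dist_le1 D1 i)) // -w_row ler_term_psumr.
- move: tpos; rewrite /t; case: eqP => [_|_ tpos]; first by rewrite ltxx.
  exists j; split; [apply: w1R | apply: w2R]; rewrite lt_def ?w1_ge0 ?w2_ge0 andbT;
    apply/eqP => w0; by rewrite w0 ?mul0r ?mulr0 ?mul0r ltxx in tpos.
Qed.

Lemma sim_trans A B C : sim A B -> sim B C -> sim A C.
Proof.
move=> [R1 [R1_sim R1_start]] [R2 [R2_sim R2_start]].
exists (fun x z => exists y, R1 x y /\ R2 y z); split; last by exists (start B).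
move=> x z [y [Rxy Ryz]] a mu1 tr1.
have [mu2 [tr2 sim12]] := R1_sim _ _ Rxy _ _ tr1.
have [mu3 [tr3 sim23]] := R2_sim _ _ Ryz _ _ tr2.
by exists mu3; split; last exact: dist_sim_comp (is_dist_trans tr1) sim12 sim23.
Qed.

Lemma consistent_rcons h e L :
  consistent (rcons h e) L <->
  consistent h L /\ (if e.1 then sim e.2 L else ~ sim e.2 L).
Proof.
elim: h => [|[b C] h IH] /=; first by case: e => b C /=; tauto.
by move: IH; tauto.
Qed.

Definition has_action (L : lpts) (s : 'I_(nst L)) (a : action) : bool :=
  has (fun t => (t.1.1 == s) && (t.1.2 == a)) (trans L).
Arguments has_action : clear implicits.

Lemma has_actionP L s a : reflect (exists mu, (s, a, mu) \in trans L) (has_action L s a).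
Proof.
apply: (iffP hasP) => [[[[s' a'] mu] tr /= /andP[/eqP <- /eqP <-]]|[mu tr]].
  by exists mu.
by exists (s, a, mu) => //=; rewrite !eqxx.
Qed.

Definition mass (L : lpts) (nu : {ffun 'I_(nst L) -> rat}) (a : action) : rat :=
  \sum_(s | has_action L s a) nu s.

Lemma mass_sim C G b f muC (P : pred 'I_(nst C)) :
  sim C G -> (start C, b, muC) \in trans C ->
  (forall i, P i -> 0 < muC i -> has_action C i f) ->
  exists nu, (start G, b, nu) \in trans G /\ \sum_(i | P i) muC i <= mass nu f.
Proof.
move=> [R [R_sim R_start]] trC P_f.
have [nu [trG [w [wb [wr [wc wR]]]]]] := R_sim _ _ R_start _ _ trC.
exists nu; split=> //.
have w_ge0 i g : 0 <= w i g by case/andP: (wb i g).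
have w_f i g : P i -> 0 < w i g -> has_action G g f.
  move=> Pi w_pos; have muC_pos : 0 < muC i.
    by rewrite -wr (lt_le_trans w_pos) // ler_term_psumr.
  have /has_actionP [mu' tr'] := P_f i Pi muC_pos.
  by have [mu2 [tr2 _]] := R_sim _ _ (wR _ _ w_pos) _ _ tr'; apply/has_actionP; exists mu2.
have -> : \sum_(i | P i) muC i = \sum_(i | P i) \sum_(g | has_action G g f) w i g.
  apply: eq_bigr => i Pi; rewrite -wr (bigID (fun g => has_action G g f)) /=.
  rewrite [X in _ + X]big1 ?addr0 // => g g_nf; apply: ge0_Ngt0_eq0 => //.
  by apply: contra g_nf; apply: w_f.
apply: (@le_trans _ _ (\sum_i \sum_(g | has_action G g f) w i g)).
  by rewrite [X in _ <= X](bigID P) /= lerDl !sumr_ge0 // => i _; rewrite sumr_ge0.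
by rewrite exchange_big /mass; apply: ler_sum => g _; rewrite wc.
Qed.

Definition aA : action := 0%N.
Definition aC : action := 1%N.
Definition aD : action := 2%N.

Definition dirac n (j : 'I_n) : {ffun 'I_n -> rat} := [ffun i => (i == j)%:R].

Lemma dirac_is_dist n (j : 'I_n) : is_dist (dirac j).
Proof.
apply/andP; split; first by apply/forallP => i; rewrite ffunE ler0n.
by rewrite (eq_bigr (fun i => if j == i then 1 else 0)) ?sumr_delta // => i _;
  rewrite ffunE eq_sym; case: eqP.
Qed.

Lemma dist_sim_dirac n1 n2 (R : 'I_n1 -> 'I_n2 -> Prop) i j :
  R i j -> dist_sim R (dirac i) (dirac j).
Proof.
move=> Rij; exists (fun x y => ((x == i) && (y == j))%:R).
split; [|split; [|split]].
- by move=> x y; case: (x == i) (y == j) => [[]|[]]; rewrite /= ?lexx ?ler01.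
- move=> x; rewrite ffunE (eq_bigr (fun y => if j == y then (x == i)%:R else 0)).
    by rewrite sumr_delta.
  by move=> y _; rewrite [j == y]eq_sym; case: (y == j); rewrite ?andbT ?andbF.
- move=> y; rewrite ffunE (eq_bigr (fun x => if i == x then (y == j)%:R else 0)).
    by rewrite sumr_delta.
  by move=> x _; rewrite [i == x]eq_sym; case: (x == i).
- by move=> x y; case: andP => [[/eqP -> /eqP ->]|]; rewrite ?ltxx.
Qed.

Definition branch_dist n : {ffun 'I_n -> rat} :=
  [ffun i => nth 0 [:: 0; 1/4; 1/2; 1/4] (val i)].

Definition u0 : 'I_4 := @Ordinal 4 0 isT.
Definition u1 : 'I_4 := @Ordinal 4 1 isT.
Definition u2 : 'I_4 := @Ordinal 4 2 isT.
Definition u3 : 'I_4 := @Ordinal 4 3 isT.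

Definition trans_U := [:: (u0, aA, branch_dist 4); (u1, aD, dirac u2); (u3, aC, dirac u2)].

Lemma trans_U_dist : all (fun t => is_dist t.2) trans_U.
Proof.
rewrite /= !dirac_is_dist !andbT; apply/andP; split.
  by apply/forallP; case=> [[|[|[|[|//]]]] ?] /=; rewrite ffunE.
by rewrite !big_ord_recr big_ord0 /= !ffunE.
Qed.

Definition U := @LPTS 4 u0 trans_U isT trans_U_dist.

Definition t0 : 'I_6 := @Ordinal 6 0 isT.
Definition t1 : 'I_6 := @Ordinal 6 1 isT.
Definition t3 : 'I_6 := @Ordinal 6 3 isT.
Definition t4 : 'I_6 := @Ordinal 6 4 isT.
Definition t5 : 'I_6 := @Ordinal 6 5 isT.

Definition trans_T := [:: (t0, aA, branch_dist 6); (t1, aD, dirac t4); (t3, aC, dirac t5)].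

Lemma trans_T_dist : all (fun t => is_dist t.2) trans_T.
Proof.
rewrite /= !dirac_is_dist !andbT; apply/andP; split.
  by apply/forallP; case=> [[|[|[|[|[|[|//]]]]]] ?] /=; rewrite ffunE.
by rewrite !big_ord_recr big_ord0 /= !ffunE.
Qed.

Definition T := @LPTS 6 t0 trans_T isT trans_T_dist.

Lemma T_tree : is_tree T.
Proof.
split; first by move=> t; rewrite !inE => /or3P [] /eqP -> /=; rewrite /in_supp ffunE.
by case=> [[|[|[|[|[|[|//]]]]]] ?] //= _; rewrite /in_supp !ffunE.
Qed.

Definition fold_T (i : 'I_6) : 'I_4 :=
  match val i with 0 => u0 | 1 => u1 | 3 => u3 | _ => u2 end%N.

Lemma fold_T_exec : is_exec_mapping T U fold_T.
Proof.
move=> c b muc; rewrite !inE => /or3P [] /eqP [-> -> ->].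
- exists (branch_dist 4); split; first by rewrite !inE eqxx.
  split; last by case=> [[|[|[|[|[|[|//]]]]]] ?]; rewrite /in_supp !ffunE.
  move=> x y; rewrite !unfold_in /in_supp.
  by case: x => [[|[|[|[|[|[|//]]]]]] ?]; case: y => [[|[|[|[|[|[|//]]]]]] ?];
    rewrite !ffunE //= => _ _ _; apply: val_inj.
- exists (dirac u2); split; first by rewrite !inE eqxx orbT.
  split; first by move=> x y; rewrite !unfold_in /in_supp !ffunE; do 2! case: eqP => // ->.
  by case=> [[|[|[|[|[|[|//]]]]]] ?]; rewrite /in_supp !ffunE.
- exists (dirac u2); split; first by rewrite !inE eqxx !orbT.
  split; first by move=> x y; rewrite !unfold_in /in_supp !ffunE; do 2! case: eqP => // ->.
  by case=> [[|[|[|[|[|[|//]]]]]] ?]; rewrite /in_supp !ffunE.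
Qed.

Lemma T_exec_U : exec_mapping T U.
Proof. by exists fold_T; exact: fold_T_exec. Qed.

Lemma T_sim_U : sim T U.
Proof. exact: (exec_mapping_sim fold_T_exec). Qed.

(* [M q] must be an LPTS for every rational [q], hence the clamping. *)
Definition clamp (q : rat) : rat := Num.max 0 (Num.min q 1).

Lemma clamp_id q : 0 <= q <= 1 -> clamp q = q.
Proof. by case/andP=> q_ge0 q_le1; rewrite /clamp (min_idPl q_le1) (max_idPr q_ge0). Qed.

Lemma clamp_ge0_le1 q : 0 <= clamp q <= 1.
Proof. by rewrite /clamp le_max lexx /= ge_max ler01 /= ge_min lexx orbT. Qed.

Definition x0 : 'I_2 := @Ordinal 2 0 isT.
Definition y0 : 'I_2 := @Ordinal 2 1 isT.

Definition coin (q : rat) : {ffun 'I_2 -> rat} := [ffun i => if i == x0 then q else 1 - q].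

Definition trans_M q := [:: (x0, aA, coin (clamp q)); (x0, aC, dirac x0); (y0, aD, dirac y0)].

Lemma trans_M_dist q : all (fun t => is_dist t.2) (trans_M q).
Proof.
rewrite /= !dirac_is_dist !andbT; have /andP[q_ge0 q_le1] := clamp_ge0_le1 q.
apply/andP; split; first by apply/forallP => i; rewrite ffunE; case: ifP; rewrite ?subr_ge0.
by rewrite !big_ord_recr big_ord0 /= !ffunE /= add0r addrC subrK.
Qed.

Definition M q := @LPTS 2 x0 (trans_M q) isT (trans_M_dist q).

Definition rel_T_M (i : 'I_6) (j : 'I_2) : Prop :=
  match val i, val j with
  | 0, 0 | 1, 1 | 3, 0 => True
  | 2, _ | 4, _ | 5, _ => True
  | _, _ => False end%N.

(* The half-mass state 2 of [T] is split between [x0] and [y0] so that the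
   quarters at [t3] and [t1] complete the column sums [q] and [1 - q]. *)
Definition coupling_T_M q (i : 'I_6) (j : 'I_2) : rat :=
  match val i, val j with
  | 1%N, 1%N => 1/4 | 2%N, 0%N => q - 1/4 | 2%N, 1%N => 3/4 - q
  | 3%N, 0%N => 1/4 | _, _ => 0 end.

Lemma T_sim_M q : 1/4 <= q <= 3/4 -> sim T (M q).
Proof.
case/andP=> q_ge q_le; have clamp_q : clamp q = q by rewrite clamp_id //; lra.
exists rel_T_M; split=> // i j Rij b mu1; rewrite !inE => /or3P [] /eqP [i_eq -> ->]; subst i.
- have -> : j = x0 by apply: val_inj; move: Rij; case: j => [[|[|//]] ?].
  exists (coin (clamp q)); split; first by rewrite !inE eqxx.
  exists (coupling_T_M q); rewrite clamp_q; split; [|split; [|split]].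
  + by case=> [[|[|[|[|[|[|//]]]]]] ?]; case=> [[|[|//]] ?]; rewrite /coupling_T_M //=;
      apply/andP; split; lra.
  + by case=> [[|[|[|[|[|[|//]]]]]] ?]; rewrite !big_ord_recr big_ord0 /= !ffunE
      /coupling_T_M /=; lra.
  + by case=> [[|[|//]] ?]; rewrite !big_ord_recr big_ord0 /= !ffunE /coupling_T_M /=; lra.
  + by case=> [[|[|[|[|[|[|//]]]]]] ?]; case=> [[|[|//]] ?]; rewrite /= ?ltxx.
- have -> : j = y0 by apply: val_inj; move: Rij; case: j => [[|[|//]] ?].
  by exists (dirac y0); split; [rewrite !inE eqxx orbT | apply: dist_sim_dirac].
- have -> : j = x0 by apply: val_inj; move: Rij; case: j => [[|[|//]] ?].
  by exists (dirac x0); split; [rewrite !inE eqxx !orbT | apply: dist_sim_dirac].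
Qed.

Lemma U_start_trans nu : (start U, aA, nu) \in trans U -> nu = branch_dist 4.
Proof. by rewrite /= !inE => /or3P [] /eqP []. Qed.

Lemma M_start_trans q nu : (start (M q), aA, nu) \in trans (M q) -> nu = coin (clamp q).
Proof. by rewrite /= !inE => /or3P [] /eqP []. Qed.

Lemma mass_U_C : mass (branch_dist 4 : {ffun 'I_(nst U) -> rat}) aC = 1/4.
Proof. by rewrite /mass big_mkcond !big_ord_recr big_ord0 /= !ffunE /= !add0r. Qed.

Lemma mass_U_D : mass (branch_dist 4 : {ffun 'I_(nst U) -> rat}) aD = 1/4.
Proof. by rewrite /mass big_mkcond !big_ord_recr big_ord0 /= !ffunE /= !addr0 add0r. Qed.

Lemma mass_M_C q : mass (coin (clamp q) : {ffun 'I_(nst (M q)) -> rat}) aC = clamp q.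
Proof. by rewrite /mass big_mkcond !big_ord_recr big_ord0 /= !ffunE /= add0r addr0. Qed.

Lemma mass_M_D q : mass (coin (clamp q) : {ffun 'I_(nst (M q)) -> rat}) aD = 1 - clamp q.
Proof. by rewrite /mass big_mkcond !big_ord_recr big_ord0 /= !ffunE /= !add0r. Qed.

Lemma ler_mass L (nu : {ffun 'I_(nst L) -> rat}) a s :
  (forall s', 0 <= nu s') -> has_action L s a -> nu s <= mass nu a.
Proof. by move=> nu_ge0 s_a; rewrite /mass (bigD1 s) //= lerDl sumr_ge0. Qed.

Lemma mass_cover L (nu : {ffun 'I_(nst L) -> rat}) a b :
  is_dist nu -> (forall s, has_action L s a || has_action L s b) ->
  1 <= mass nu a + mass nu b.
Proof.
move=> D cover; rewrite -(dist_sum D) /mass.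
rewrite [X in _ <= X + _]big_mkcond [X in _ <= _ + X]big_mkcond -big_split /=.
apply: ler_sum => s _; have := dist_ge0 D s.
by case/orP: (cover s) => ->; case: ifP => _ nu_ge0; rewrite ?lerDl ?lerDr ?addr0.
Qed.

Lemma sum_two_states (V : nmodType) n (g0 g1 : 'I_n) (F : 'I_n -> V) :
  (n <= 2)%N -> g0 != g1 -> \sum_g F g = F g0 + F g1.
Proof.
move=> n_le2 g01; rewrite (bigD1 g0) //= (bigD1 g1) 1?eq_sym //= big_pred0 ?addr0 //.
move=> g; apply/negbTE; rewrite negb_and !negbK; move: g01; rewrite -!val_eqE.
move: (leq_trans (ltn_ord g0) n_le2) (leq_trans (ltn_ord g1) n_le2).
move: (leq_trans (ltn_ord g) n_le2).
by case: g0 g1 g => [[|[|?]] ?] [[|[|?]] ?] [[|[|?]] ?].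
Qed.

(* Either every successor enables [C] or [D], or one enables neither and then
   the quarters of [T] leading to [C] and to [D] both land on the other one. *)
Lemma two_state_mass_CD H : sim T H -> (nst H <= 2)%N ->
  exists mu, (start H, aA, mu) \in trans H /\ 1 <= mass mu aC + mass mu aD.
Proof.
move=> [R [R_sim R_start]] H_le2.
have [mu [trH [w [wb [wr [wc wR]]]]]] := R_sim _ _ R_start aA (branch_dist 6) (mem_head _ _).
exists mu; split=> //; have D := is_dist_trans trH.
have w_ge0 i g : 0 <= w i g by case/andP: (wb i g).
have w_action i a mu_i g : (i, a, mu_i) \in trans T -> 0 < w i g -> has_action H g a.
  move=> trT w_pos; have [nu [trH' _]] := R_sim _ _ (wR _ _ w_pos) _ _ trT.
  by apply/has_actionP; exists nu.
have t3_C g : 0 < w t3 g -> has_action H g aC.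
  by apply: (w_action _ _ (dirac t5)); rewrite !inE eqxx !orbT.
have t1_D g : 0 < w t1 g -> has_action H g aD.
  by apply: (w_action _ _ (dirac t4)); rewrite !inE eqxx orbT.
case: (pickP (fun g => ~~ has_action H g aC && ~~ has_action H g aD)) => [g0|cover];
  last by apply: mass_cover => // g; move/negbT: (cover g); rewrite negb_and !negbK.
case/andP => g0_nC g0_nD.
have w_t3_g0 : w t3 g0 = 0 by apply: ge0_Ngt0_eq0 => //; apply: contra g0_nC; exact: t3_C.
have w_t1_g0 : w t1 g0 = 0 by apply: ge0_Ngt0_eq0 => //; apply: contra g0_nD; exact: t1_D.
have [g1 /andP[_ w_t3_g1]] : exists g1, true && (0 < w t3 g1).
  by apply: psumr_neq0P => //; rewrite wr ffunE; apply/eqP.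
have g01 : g0 != g1 by apply: contraTneq w_t3_g1 => <-; rewrite w_t3_g0 ltxx.
have sum2 := sum_two_states _ H_le2 g01.
have w_t3 : w t3 g1 = 1/4 by move: (wr t3); rewrite sum2 w_t3_g0 add0r ffunE.
have w_t1 : w t1 g1 = 1/4 by move: (wr t1); rewrite sum2 w_t1_g0 add0r ffunE.
have mu_g1 : w t3 g1 + w t1 g1 <= mu g1.
  by rewrite -wc (bigD1 t3) //= (bigD1 t1) //= addrA lerDl sumr_ge0.
have g1_D : has_action H g1 aD by apply: t1_D; rewrite w_t1.
have := ler_mass (dist_ge0 D) (t3_C _ w_t3_g1); have := ler_mass (dist_ge0 D) g1_D.
lra.
Qed.

(* Defs numbers the states of an LPTS; here they may form any finite type. *)
Section LptsOfFinType.
Variables (S : finType) (r : S) (tr : seq (S * action * {ffun S -> rat})).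

Definition is_distT (mu : {ffun S -> rat}) := [forall s, 0 <= mu s] && (\sum_s mu s == 1).

Hypotheses (tr_uniq : uniq tr) (tr_dist : all (fun t => is_distT t.2) tr).

Definition ord_ffun (mu : {ffun S -> rat}) : {ffun 'I_#|S| -> rat} :=
  [ffun i => mu (enum_val i)].

Definition ord_trans (t : S * action * {ffun S -> rat}) :=
  (enum_rank t.1.1, t.1.2, ord_ffun t.2).

Lemma ord_trans_inj : injective ord_trans.
Proof.
move=> [[s1 b1] m1] [[s2 b2] m2] [/enum_rank_inj -> -> m12]; congr (_, _, _).
by apply/ffunP => s; move/ffunP: m12 => /(_ (enum_rank s)); rewrite !ffunE enum_rankK.
Qed.

Lemma ord_trans_uniq : uniq (map ord_trans tr).
Proof. by rewrite map_inj_uniq //; exact: ord_trans_inj. Qed.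

Lemma ord_trans_dist : all (fun t => is_dist t.2) (map ord_trans tr).
Proof.
apply/allP => _ /mapP [t tr_t ->].
have /andP[/forallP t_ge0 /eqP t_sum] := allP tr_dist t tr_t.
apply/andP; split; first by apply/forallP => i; rewrite ffunE.
by rewrite (eq_bigr (fun i => t.2 (enum_val i))) -?big_enum_val ?t_sum // => i _;
  rewrite ffunE.
Qed.

Definition lpts_of := @LPTS #|S| (enum_rank r) (map ord_trans tr) ord_trans_uniq ord_trans_dist.

Lemma lpts_of_trans s b mu :
  (s, b, mu) \in tr -> (enum_rank s, b, ord_ffun mu) \in trans lpts_of.
Proof. exact: (map_f ord_trans). Qed.

Lemma lpts_of_tree :
  (forall t, t \in tr -> ~~ (0 < t.2 r)) ->
  (forall s, s != r -> count (fun t : S * action * {ffun S -> rat} => 0 < t.2 s) tr = 1%N) ->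
  is_tree lpts_of.
Proof.
move=> r_root s_count; split.
  by move=> _ /mapP [t tr_t ->]; rewrite /in_supp /= ffunE enum_rankK; exact: r_root.
move=> i i_neq; rewrite /= count_map -(s_count (enum_val i)).
  by apply: eq_count => t; rewrite /in_supp /= ffunE.
by apply: contra i_neq => /eqP r_eq; rewrite /= -r_eq enum_valK.
Qed.

Lemma lpts_of_exec L (E : S -> 'I_(nst L)) :
  (forall s b mu, (s, b, mu) \in tr -> exists nu, (E s, b, nu) \in trans L /\
     (forall x y, 0 < mu x -> 0 < mu y -> E x = E y -> x = y) /\
     (forall x, 0 < mu x -> mu x = nu (E x))) ->
  is_exec_mapping lpts_of L (fun i => E (enum_val i)).
Proof.
move=> E_exec c b _ /mapP [[[s b0] mu] tr_s [-> -> ->]].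
have [nu [trL [E_inj E_eq]]] := E_exec _ _ _ tr_s.
exists nu; rewrite enum_rankK; split=> //; split; last first.
  by move=> x; rewrite /in_supp ffunE => x_supp; apply: E_eq.
move=> x y; rewrite !unfold_in /in_supp /= !ffunE => x_supp y_supp Exy.
by apply: enum_val_inj; apply: E_inj.
Qed.

End LptsOfFinType.

(* The negative counterexample: the depth-two tree obtained from [H] by
   taking its [aA]-transition [mu] from the start state and then, from each
   reached state, its (first) [f]-transition.  Only states reached with
   positive probability are kept, since in a stochastic tree every non-root
   state lies in the support of exactly one transition. *)
Section Unfolding.
Variables (H : lpts) (mu : {ffun 'I_(nst H) -> rat}) (f : action).
Hypotheses (f_neq_aA : f != aA) (trH_mu : (start H, aA, mu) \in trans H).

Local Notation n := (nst H).

Definition f_succ (h : 'I_n) : option {ffun 'I_n -> rat} :=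
  ohead [seq t.2 | t <- trans H & (t.1.1 == h) && (t.1.2 == f)].

Lemma f_succ_trans h nu : f_succ h = Some nu -> (h, f, nu) \in trans H.
Proof.
rewrite /f_succ; case E: [seq t <- trans H | _] => [|t s] //= [<-].
have : t \in [seq t <- trans H | (t.1.1 == h) && (t.1.2 == f)] by rewrite E mem_head.
by rewrite mem_filter => /andP[/andP[/eqP <- /eqP <-]]; case: t {E} => [[]].
Qed.

Lemma f_succ_has_action h : isSome (f_succ h) = has_action H h f.
Proof. by rewrite /f_succ /has_action has_filter; case: [seq t <- trans H | _]. Qed.

Lemma mu_ge0 h : 0 <= mu h.
Proof. exact: (dist_ge0 (is_dist_trans trH_mu) h). Qed.

(* [None] is the root, [Some (h, None)] the copy of [h] reached by [aA] and
   [Some (h, Some h')] the copy of [h'] reached from it by [f]. *)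
Definition path_state := option ('I_n * option 'I_n).

Definition reachable (p : path_state) : bool :=
  match p with
  | None => true
  | Some (h, None) => 0 < mu h
  | Some (h, Some h') => (0 < mu h) && (if f_succ h is Some nu then 0 < nu h' else false)
  end.

Definition unfold_state := {p in [pred p | reachable p]}.

Definition root : unfold_state := @exist _ _ None isT.
Definition child (h : 'I_n) : unfold_state := insubd root (Some (h, None)).

Lemma val_child h : 0 < mu h -> val (child h) = Some (h, None).
Proof. by move=> mu_h; rewrite /child insubdK. Qed.

Definition root_dist : {ffun unfold_state -> rat} :=
  [ffun s => if val s is Some (h, None) then mu h else 0].

Definition child_dist (h : 'I_n) : {ffun unfold_state -> rat} :=
  [ffun s => match val s with
     | Some (h0, Some h') => if h0 == h then (if f_succ h is Some nu then nu h' else 0) else 0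
     | _ => 0 end].

Definition f_children := [seq h <- enum 'I_n | (0 < mu h) && isSome (f_succ h)].

Lemma mem_f_children h : (h \in f_children) = (0 < mu h) && isSome (f_succ h).
Proof. by rewrite mem_filter mem_enum andbT. Qed.

Definition trans_unfold :=
  (root, aA, root_dist) :: [seq (child h, f, child_dist h) | h <- f_children].

Lemma sum_unfold_state (F : path_state -> rat) : (forall p, ~~ reachable p -> F p = 0) ->
  \sum_(s : unfold_state) F (val s) =
  F None + \sum_h (F (Some (h, None)) + \sum_h' F (Some (h, Some h'))).
Proof.
move=> F_unreachable.
rewrite -(big_sub_cond [pred p | reachable p] xpredT F) big_mkcond /=.
rewrite (eq_bigr F); last by move=> p _; rewrite andbT; case: ifP => // /negbT /F_unreachable ->.
rewrite big_option; congr (_ + _).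
rewrite (eq_bigr (fun p => F (Some (p.1, p.2)))); last by case.
by rewrite -(pair_bigA _ (fun h o => F (Some (h, o)))); apply: eq_bigr => h _; rewrite big_option.
Qed.

Lemma trans_unfold_uniq : uniq trans_unfold.
Proof.
rewrite /trans_unfold /=; apply/andP; split.
  by apply/negP => /mapP [h _ [_ f_eq _]]; move: f_neq_aA; rewrite f_eq eqxx.
rewrite map_inj_in_uniq; first by rewrite filter_uniq // enum_uniq.
move=> h h'; rewrite !mem_f_children => /andP[mu_h _] /andP[mu_h' _] [child_eq _].
by move: (congr1 val child_eq); rewrite !val_child // => -[].
Qed.

Lemma root_dist_dist : is_distT root_dist.
Proof.
apply/andP; split.
  by apply/forallP => s; rewrite ffunE; case: (val s) => [[h0 [h'|]]|] //=; exact: mu_ge0.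
pose F (p : path_state) : rat := if p is Some (h, None) then mu h else 0.
rewrite (eq_bigr (fun s => F (val s))); last by move=> s _; rewrite ffunE.
rewrite sum_unfold_state /F /= ?add0r.
  rewrite (eq_bigr (fun h => mu h)) ?(dist_sum (is_dist_trans trH_mu)) //.
  by move=> h _; rewrite big1 ?addr0.
by move=> [[h0 [h'|]]|] //= mu_h0; apply: ge0_Ngt0_eq0 => //; exact: mu_ge0.
Qed.

Lemma child_dist_dist h : h \in f_children -> is_distT (child_dist h).
Proof.
rewrite mem_f_children => /andP[mu_h]; case E: (f_succ h) => [nu|] // _.
have D := is_dist_trans (f_succ_trans E).
apply/andP; split.
  apply/forallP => s; rewrite ffunE; case: (val s) => [[h0 [h'|]]|] //.
  by case: eqP => // _; rewrite E; apply: dist_ge0.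
pose F (p : path_state) : rat :=
  if p is Some (h0, Some h') then (if h0 == h then nu h' else 0) else 0.
rewrite (eq_bigr (fun s => F (val s))); last first.
  by move=> s _; rewrite ffunE E /F; case: (val s) => [[? [?|]]|].
rewrite sum_unfold_state /F /=.
  rewrite add0r (eq_bigr (fun h0 => if h0 == h then \sum_h' nu h' else 0)).
    by rewrite -big_mkcond big_pred1_eq (dist_sum D).
  by move=> h0 _; rewrite add0r; case: eqP => // _; rewrite big1.
move=> [[h0 [h'|]]|] //=; case: eqP => // ->; rewrite mu_h E /=.
by move=> /negbTE nu_h'; apply: ge0_Ngt0_eq0; [apply: dist_ge0 | rewrite nu_h'].
Qed.

Lemma trans_unfold_dist : all (fun t => is_distT t.2) trans_unfold.
Proof.
rewrite /= root_dist_dist; apply/allP => _ /mapP [h h_child ->].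
exact: child_dist_dist.
Qed.

Definition unfold := lpts_of root trans_unfold_uniq trans_unfold_dist.

Lemma unfold_tree : is_tree unfold.
Proof.
apply: lpts_of_tree.
  by move=> t; rewrite inE => /orP [/eqP -> /=|/mapP [h _ ->] /=]; rewrite ffunE.
move=> s s_neq; rewrite /trans_unfold /= count_map ffunE.
have : reachable (val s) := valP s.
case E: (val s) => [[h [h'|]]|] /= s_reach.
- move: s_reach => /andP[mu_h]; case F: (f_succ h) => [nu|] // nu_h'.
  rewrite add0n (eq_count (a2 := pred1 h)).
    rewrite count_uniq_mem; last by rewrite filter_uniq // enum_uniq.
    by rewrite mem_f_children mu_h F.
  move=> h0 /=; rewrite ffunE E; case: (eqVneq h h0) => [<-|]; last by rewrite ltxx.
  by rewrite F /= nu_h'.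
- rewrite s_reach add1n; congr (_.+1); apply/eqP; rewrite -leqn0 leqNgt -has_count.
  by apply/hasP => -[h0 _]; rewrite /= ffunE E ltxx.
- by move: s_neq; have -> : s = root by apply: val_inj; rewrite E.
Qed.

Definition fold_unfold (s : unfold_state) : 'I_n :=
  match val s with None => start H | Some (h, None) => h | Some (_, Some h') => h' end.

Lemma fold_unfold_exec : is_exec_mapping unfold H (fun i => fold_unfold (enum_val i)).
Proof.
apply: lpts_of_exec => s b m; rewrite inE => /orP [/eqP [-> -> ->]|/mapP [h h_child [-> -> ->]]].
  exists mu; split=> //; split; last first.
    by move=> x; rewrite !ffunE /fold_unfold; case: (val x) => [[hx [?|]]|]; rewrite ?ltxx.
  move=> x y; rewrite !ffunE /fold_unfold.
  case Ex: (val x) => [[hx [?|]]|]; rewrite ?ltxx // => _.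
  case Ey: (val y) => [[hy [?|]]|]; rewrite ?ltxx // => _ xy.
  by apply: val_inj; rewrite Ex Ey xy.
move: (h_child); rewrite mem_f_children => /andP[mu_h]; case F: (f_succ h) => [nu|] // _.
exists nu; rewrite /fold_unfold val_child //; split; first exact: f_succ_trans.
split; last first.
  move=> x; rewrite !ffunE /fold_unfold.
  by case: (val x) => [[hx [hx'|]]|]; rewrite ?ltxx //; case: eqP; rewrite ?ltxx // F.
move=> x y; rewrite !ffunE /fold_unfold.
case Ex: (val x) => [[hx [hx'|]]|]; rewrite ?ltxx //.
case: eqP => [hx_eq|_]; rewrite ?ltxx // F => _.
case Ey: (val y) => [[hy [hy'|]]|]; rewrite ?ltxx //.
case: eqP => [hy_eq|_]; rewrite ?ltxx // => _ xy.
by apply: val_inj; rewrite Ex Ey hx_eq hy_eq xy.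
Qed.

Lemma unfold_exec : exec_mapping unfold H.
Proof. by exists (fun i => fold_unfold (enum_val i)); exact: fold_unfold_exec. Qed.

Lemma unfold_sim : sim unfold H.
Proof. by apply: (exec_mapping_sim fold_unfold_exec); rewrite /= enum_rankK. Qed.

Lemma unfold_mass G : sim unfold G ->
  exists nu, (start G, aA, nu) \in trans G /\ mass mu f <= mass nu f.
Proof.
move=> unfold_G.
have tr_root : (start unfold, aA, ord_ffun root_dist) \in trans unfold.
  by apply: lpts_of_trans; rewrite mem_head.
pose enables_f (s : unfold_state) := if val s is Some (h, None) then has_action H h f else false.
have f_enabled i : enables_f (enum_val i) -> 0 < ord_ffun root_dist i -> has_action unfold i f.
  rewrite /enables_f ffunE ffunE; case E: (val (enum_val i)) => [[h [h'|]]|] // h_f mu_h.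
  have h_child : h \in f_children by rewrite mem_f_children mu_h f_succ_has_action h_f.
  have child_i : child h = enum_val i by apply: val_inj; rewrite val_child.
  apply/has_actionP; exists (ord_ffun (child_dist h)); rewrite -[i]enum_valK -child_i.
  by apply: lpts_of_trans; rewrite inE; apply/orP; right; apply/mapP; exists h.
have [nu [trG mass_le]] := mass_sim unfold_G tr_root f_enabled.
exists nu; split=> //; apply: le_trans mass_le.
rewrite (eq_bigr (fun i => root_dist (enum_val i))); last by move=> i _; rewrite ffunE.
rewrite -(big_enum_val_cond enables_f) big_mkcond /=.
pose F (p : path_state) : rat :=
  if p is Some (h, None) then (if has_action H h f then mu h else 0) else 0.
rewrite (eq_bigr (fun s => F (val s))); last first.
  by move=> s _; rewrite /enables_f /F ffunE; case: (val s) => [[? [?|]]|] //; case: ifP.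
rewrite sum_unfold_state /F /= ?add0r.
  by under eq_bigr => h _ do rewrite big1 // addr0; rewrite /mass big_mkcond.
move=> [[h0 [h'|]]|] //= mu_h0; case: ifP => // _.
by apply: ge0_Ngt0_eq0 => //; exact: mu_ge0.
Qed.

End Unfolding.

Lemma unfold_not_sim H mu f (f_neq : f != aA) (trH : (start H, aA, mu) \in trans H) G :
  (forall nu, (start G, aA, nu) \in trans G -> mass nu f < mass mu f) ->
  ~ sim (unfold f_neq trH) G.
Proof.
move=> mass_lt /unfold_mass [nu [trG mass_le]].
by have := mass_lt _ trG; rewrite ltNge mass_le.
Qed.

Definition legal_answer (H : lpts) (e : cex) : Prop :=
  is_tree e.2 /\
  (if e.1 then sim e.2 U /\ ~ sim e.2 H /\ exec_mapping e.2 U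
   else sim e.2 H /\ ~ sim e.2 U /\ exec_mapping e.2 H).

Lemma positive_answer H : ~ sim T H -> ~ sim_equiv H U /\ legal_answer H (true, T).
Proof.
move=> nT; split; first by move=> [_ UH]; apply: nT; exact: sim_trans T_sim_U UH.
by split; [exact: T_tree | do !split; [exact: T_sim_U | exact: nT | exact: T_exec_U]].
Qed.

Lemma negative_answer H mu f (f_neq : f != aA) (trH : (start H, aA, mu) \in trans H) :
  mass (branch_dist 4 : {ffun 'I_(nst U) -> rat}) f = 1/4 -> 1/4 < mass mu f ->
  ~ sim_equiv H U /\ legal_answer H (false, unfold f_neq trH).
Proof.
move=> mass_U mass_gt; have nU : ~ sim (unfold f_neq trH) U.
  by apply: unfold_not_sim => nu /U_start_trans ->; rewrite mass_U.
split; first by move=> [HU _]; apply: nU; exact: sim_trans (unfold_sim _ _) HU.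
by split; [exact: unfold_tree | do !split; [exact: unfold_sim | exact: nU | exact: unfold_exec]].
Qed.

Definition game_inv (h : seq cex) (q1 q2 : rat) : Prop :=
  1/4 <= q1 /\ q1 < q2 /\ q2 <= 3/4 /\ forall q, q1 <= q <= q2 -> consistent h (M q).

Lemma positive_inv h q1 q2 : game_inv h q1 q2 -> game_inv (rcons h (true, T)) q1 q2.
Proof.
move=> [q1_ge [q12 [q2_le h_cons]]]; do 3!split=> //.
move=> q q_in; apply/consistent_rcons; split; first exact: h_cons.
by apply: T_sim_M; case/andP: q_in => /= q1q qq2; apply/andP; split; lra.
Qed.

Section Bisection.
Variables (H : lpts) (mu : {ffun 'I_(nst H) -> rat}) (h : seq cex) (q1 q2 : rat).
Hypotheses (trH : (start H, aA, mu) \in trans H) (h_inv : game_inv h q1 q2).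

Local Notation m := ((q1 + q2) / 2).

Lemma bisect_C (aC_neq : aC != aA) :
  m < mass mu aC -> game_inv (rcons h (false, unfold aC_neq trH)) q1 m.
Proof.
case: h_inv => [q1_ge [q12 [q2_le h_cons]]] mass_gt.
split; [lra | split; [lra | split; [lra |]]].
move=> q /andP[q1q qm]; apply/consistent_rcons; split.
  by apply: h_cons; rewrite q1q /=; lra.
apply: unfold_not_sim => nu /M_start_trans ->.
by rewrite mass_M_C clamp_id; [lra | apply/andP; split; lra].
Qed.

Lemma bisect_D (aD_neq : aD != aA) :
  1 <= mass mu aC + mass mu aD -> mass mu aC <= m ->
  game_inv (rcons h (false, unfold aD_neq trH)) ((m + q2) / 2) q2.
Proof.
case: h_inv => [q1_ge [q12 [q2_le h_cons]]] mass_CD mass_C.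
split; [lra | split; [lra | split; [lra |]]].
move=> q /andP[q_ge qq2]; apply/consistent_rcons; split.
  by apply: h_cons; rewrite qq2 andbT; lra.
apply: unfold_not_sim => nu /M_start_trans ->.
by rewrite mass_M_D clamp_id; [lra | apply/andP; split; lra].
Qed.

End Bisection.

Lemma aC_neq_aA : aC != aA. Proof. by []. Qed.
Lemma aD_neq_aA : aD != aA. Proof. by []. Qed.

Section Teacher.
Variable lrn : learner.
Hypothesis lrn_min : min_state_learner lrn.

(* The interval [[q1, q2]] holds the parameters [q] for which [M q] is still
   consistent.  Answer [T] if the conjecture does not simulate it (the bound on
   its states always holds); otherwise answer the unfolding along [aC] or [aD]
   that refutes one half of the interval. *)
Definition teacher (h : seq cex) (q1 q2 : rat) : cex * rat * rat :=
  match excluded_middle_informative (sim T (lrn h) /\ (nst (lrn h) <= 2)%N) with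
  | right _ => ((true, T), q1, q2)
  | left HT =>
    let (mu, Hmu) := constructive_indefinite_description _
                       (two_state_mass_CD (proj1 HT) (proj2 HT)) in
    let m := (q1 + q2) / 2 in
    if m < mass mu aC then ((false, unfold aC_neq_aA (proj1 Hmu)), q1, m)
    else ((false, unfold aD_neq_aA (proj1 Hmu)), (m + q2) / 2, q2)
  end.

Lemma teacher_round h q1 q2 : game_inv h q1 q2 ->
  let: (e, q1', q2') := teacher h q1 q2 in
  ~ sim_equiv (lrn h) U /\ legal_answer (lrn h) e /\ game_inv (rcons h e) q1' q2'.
Proof.
move=> h_inv; have [q1_ge [q12 [q2_le h_cons]]] := h_inv.
have M_q1 : consistent h (M q1) by apply: h_cons; rewrite lexx ltW.
have lrn_le2 : (nst (lrn h) <= 2)%N := (lrn_min (ex_intro _ _ M_q1)).2 _ M_q1.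
rewrite /teacher; case: excluded_middle_informative => [HT|nHT]; last first.
  have nT : ~ sim T (lrn h) by move=> HT; exact: nHT (conj HT lrn_le2).
  by have [] := positive_answer nT; split=> //; split=> //; exact: positive_inv.
case: constructive_indefinite_description => mu [trH mass_CD] /=.
case: ltrP => [C_gt|C_le].
  have [|nU legal] := negative_answer aC_neq_aA trH mass_U_C; first lra.
  by split=> //; split=> //; exact: bisect_C.
have [|nU legal] := negative_answer aD_neq_aA trH mass_U_D; first lra.
by split=> //; split=> //; exact: bisect_D.
Qed.

Fixpoint game_state (k : nat) : seq cex * rat * rat :=
  if k is k'.+1 then
    let: (h, q1, q2) := game_state k' in
    let: (e, q1', q2') := teacher h q1 q2 in (rcons h e, q1', q2')
  else ([::], 1/4, 3/4).

Definition teacher_cex (k : nat) : cex :=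
  let: (h, q1, q2) := game_state k in (teacher h q1 q2).1.1.

Lemma game_state_inv k :
  let: (h, q1, q2) := game_state k in game_inv h q1 q2 /\ history teacher_cex k = h.
Proof.
elim: k => [|k]; first by split; [do 3!split |].
have history_S : history teacher_cex k.+1 = rcons (history teacher_cex k) (teacher_cex k).
  by rewrite /history -addn1 iotaD map_cat cats1.
rewrite history_S /teacher_cex /=.
case: (game_state k) => [[h q1] q2] [h_inv ->] /=.
by have := teacher_round h_inv; case: (teacher h q1 q2) => [[e q1'] q2'] [_ [_ inv']].
Qed.

Lemma teacher_cex_round k :
  let H := lrn (history teacher_cex k) in
  ~ sim_equiv H U /\ legal_answer H (teacher_cex k) /\
  exists L, consistent (history teacher_cex k.+1) L.
Proof.
have := game_state_inv k.+1; have := game_state_inv k.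
rewrite [game_state k.+1]/= [teacher_cex k]/teacher_cex.
case: (game_state k) => [[h q1] q2] [h_inv ->].
have := teacher_round h_inv; case: (teacher h q1 q2) => [[e q1'] q2'] [nU [legal _]].
move=> [[_ [q12' [_ cons']]] ->].
by split=> //; split=> //; exists (M q1'); apply: cons'; rewrite lexx ltW.
Qed.

End Teacher.

Theorem theorem6 :
  forall lrn : learner, min_state_learner lrn ->
  exists (U : lpts) (c : nat -> cex), bad_run lrn U c.
Proof.
move=> lrn lrn_min; exists U, (teacher_cex lrn) => k.
have [not_equiv [[tree answer] consistent_next]] := teacher_cex_round lrn_min k.
exact: (conj not_equiv (conj tree (conj answer consistent_next))).
Qed.
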